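(* Let $k\ge 1$ be an integer, let $C(k)=\prod_{p\le 2k,\ p\text{ prime}}p$, and let $a\in\mathbb{C}$ with $a\neq 0$. Define $$Z_a^k=\Big\{(\zeta_1,\dots,\zeta_k)\ :\ \zeta_i \text{ roots of unity, and } \exists\, a_1,\dots,a_k\in\mathbb{Q} \text{ with } \sum_{i=1}^k a_i\zeta_i=a \text{ and } \sum_{i\in I}a_i\zeta_i\neq 0 \text{ for all } \emptyset\neq I\subseteq[k]\Big\}.$$ Then $|Z_a^k|\le (k\cdot C(k))^k$.
   Context: $[k]=\{1,\dots,k\}$. *)

From mathcomp Require Import all_boot all_order all_algebra.
Set Implicit Arguments. Unset Strict Implicit. Unset Printing Implicit Defensive.
Import Order.TTheory GRing.Theory Num.Theory.
Local Open Scope ring_scope.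

Definition is_root_of_unity {C : numClosedFieldType} (z : C) : Prop :=
  exists n : nat, (0 < n)%N /\ z ^+ n = 1.

Definition Cconst (k : nat) : nat := (\prod_(p < (2 * k).+1 | prime p) p)%N.

Definition inZ {C : numClosedFieldType} (k : nat) (a : C) (z : k.-tuple C) : Prop :=
  (forall i : 'I_k, is_root_of_unity (tnth z i)) /\
  exists c : 'I_k -> rat,
    \sum_(i < k) ratr (c i) * tnth z i = a /\
    forall I : {set 'I_k}, I != set0 -> \sum_(i in I) ratr (c i) * tnth z i != 0.

(* Mann's theorem: if [sum_(i in A) c_i w_i = 0] is a minimal vanishing sum of
   roots of unity with rational coefficients and some [w_j0 = 1], then every
   [w_i] is a root of unity of squarefree order with prime factors [<= #|A|].
   A superfluous prime [p] is removed from a common order [p N'] by applying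
   the Galois conjugations [w |-> w^(1 + N' r)] and averaging over [r < p].
   For [zeta], [xi] in [Z_a^k], the vanishing sum [sum c_i zeta_i - sum b_j xi_j]
   has a minimal vanishing subsum through [zeta_i], which must contain some
   [xi_j]; Mann's theorem shows that [zeta_i / xi_j] is a [C(k)]-th root of
   unity. Fixing [xi], each point of [Z_a^k] is thus encoded by a map
   [i |-> (j, m)] with [zeta_i = xi_j rho^m], whence the bound [(k C(k))^k]. *)

From mathcomp Require Import all_boot all_order all_algebra.
From mathcomp Require Import cyclic all_field zify ring.
Set Implicit Arguments. Unset Strict Implicit. Unset Printing Implicit Defensive.
Import Order.TTheory GRing.Theory Num.Theory.
Local Open Scope ring_scope.

Local Notation QPhi n := (map_poly (intr : int -> rat) 'Phi_n).

Lemma prim_root_exists (C : numClosedFieldType) n :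
  (0 < n)%N -> exists z : C, n.-primitive_root z.
Proof.
move=> n_gt0; have [r DXn1] := closed_field_poly_normal ('X^n - 1 : {poly C}).
rewrite lead_coefXnsubC // scale1r in DXn1.
have r_unity : all n.-unity_root r by apply/allP => z; rewrite -root_prod_XsubC -DXn1.
have uniq_r : uniq r.
  by rewrite -separable_prod_XsubC -DXn1 separable_Xn_sub_1 // pnatr_eq0 -lt0n.
have size_r : (n <= size r)%N.
  by rewrite -ltnS -(size_prod_XsubC r id) -DXn1 size_XnsubC.
by have /hasP[z] := has_prim_root n_gt0 r_unity uniq_r size_r; exists z.
Qed.

(* The argument of [Cintr_Cyclotomic], over an arbitrary field. *)
Lemma map_Cyclotomic (F : fieldType) n (z : F) :
  n.-primitive_root z -> map_poly intr 'Phi_n = cyclotomic z n.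
Proof.
elim/ltn_ind: n z => n IHn z prim_z.
have n_gt0 := prim_order_gt0 prim_z.
have [uDn _ inDn] := divisors_correct n_gt0.
pose q := \prod_(d <- rem n (divisors n)) 'Phi_d.
have nz_q : map_poly (intr : int -> F) q != 0.
  by apply/monic_neq0/monic_map/monic_prod => d _; apply: Cyclotomic_monic.
apply: (mulIf nz_q); rewrite -rmorphM /=.
have -> : 'Phi_n * q = 'X^n - 1 by rewrite -(prod_Cyclotomic n_gt0) (big_rem n) ?inDn.
rewrite rmorphB /= rmorph1 map_polyXn (prod_cyclotomic prim_z) (big_rem n) ?inDn //=.
rewrite divnn n_gt0 expr1 rmorph_prod /=; congr (_ * _).
apply: eq_big_seq => d; rewrite mem_rem_uniq ?inE //= inDn => /andP[n'd ddvn].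
by rewrite -IHn ?dvdn_prim_root // ltn_neqAle n'd dvdn_leq.
Qed.

Lemma map_ratr_intr (F : numFieldType) (p : {poly int}) :
  map_poly (ratr : rat -> F) (map_poly intr p) = map_poly intr p.
Proof. by rewrite -map_poly_comp; apply: eq_map_poly => b; rewrite /= rmorph_int. Qed.

(* Irreducibility of ['Phi_n] over [rat] is available in [algC] only (through
   [minCpoly]), so a root of [gcdp P (QPhi n)] is transported to [algC]. *)
Lemma Cyclotomic_dvdp (C : numClosedFieldType) n (z : C) (P : {poly rat}) :
  n.-primitive_root z -> root (map_poly ratr P) z -> QPhi n %| P.
Proof.
move=> prim_z Pz; have n_gt0 := prim_order_gt0 prim_z.
have Phi_nz : QPhi n != 0 by apply/monic_neq0/monic_map/Cyclotomic_monic.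
set g := gcdp P (QPhi n).
have gz : root (map_poly (ratr : rat -> C) g) z.
  by rewrite gcdp_map root_gcd Pz /= map_ratr_intr (map_Cyclotomic prim_z) root_cyclotomic.
have size_g : (1 < size g)%N.
  rewrite -(size_map_poly (ratr : {rmorphism rat -> C})).
  by apply: root_size_gt1 gz; rewrite map_poly_eq0 gcdp_eq0 negb_and Phi_nz orbT.
have [w gw] : exists w, root (map_poly (ratr : rat -> algC) g) w.
  by apply/closed_rootP; rewrite size_map_poly neq_ltn size_g orbT.
have [u prim_u] := C_prim_root_exists n_gt0.
have prim_w : n.-primitive_root w.
  rewrite -(root_cyclotomic prim_u) -(map_Cyclotomic prim_u) -map_ratr_intr.
  by apply: root_dvdp gw; rewrite dvdp_map dvdp_gcdr.
have [q [Dq _] dvd_q] := minCpolyP w.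
have <- : q = QPhi n.
  apply: (map_inj_poly (fmorph_inj (ratr : {rmorphism rat -> algC}))); first exact: rmorph0.
  by rewrite -Dq (minCpoly_cyclotomic prim_w) map_ratr_intr (map_Cyclotomic prim_w).
by rewrite -dvd_q; apply: root_dvdp gw; rewrite dvdp_map dvdp_gcdl.
Qed.

Lemma root_exp_coprime (C : numClosedFieldType) n (z : C) (P : {poly rat}) t :
  n.-primitive_root z -> coprime t n ->
  root (map_poly ratr P) z -> root (map_poly ratr P) (z ^+ t).
Proof.
move=> prim_z co /(Cyclotomic_dvdp prim_z).
rewrite -(dvdp_map (ratr : {rmorphism rat -> C})) => /root_dvdp; apply.
by rewrite map_ratr_intr (map_Cyclotomic prim_z) root_cyclotomic ?prim_root_exp_coprime.
Qed.

Lemma sum_exp_coprime_eq0 (C : numClosedFieldType) (I : finType) (A : {set I})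
    (c : I -> rat) (w : I -> C) N t :
  (0 < N)%N -> {in A, forall i, w i ^+ N = 1} -> coprime t N ->
  \sum_(i in A) ratr (c i) * w i = 0 -> \sum_(i in A) ratr (c i) * w i ^+ t = 0.
Proof.
move=> N_gt0 wN co sum0; have [z prim_z] := prim_root_exists C N_gt0.
have [e we] : exists e : I -> nat, {in A, forall i, w i = z ^+ e i}.
  apply: (@fin_all_exists _ (fun=> nat) (fun i u => i \in A -> w i = z ^+ u)) => i.
  case: (boolP (i \in A)) => [iA|]; last by exists 0%N.
  by have [j ->] := prim_rootP prim_z (wN i iA); exists (val j).
pose P : {poly rat} := \sum_(i in A) c i *: 'X^(e i).
have evalP x : (map_poly (ratr : rat -> C) P).[x] = \sum_(i in A) ratr (c i) * x ^+ e i.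
  rewrite rmorph_sum horner_sum; apply: eq_bigr => i _.
  by rewrite /= map_polyZ map_polyXn hornerZ hornerXn.
have /(root_exp_coprime prim_z co) : root (map_poly ratr P) z.
  by rewrite /root evalP -[X in _ == X]sum0; apply/eqP/eq_bigr => i iA; rewrite we.
rewrite /root evalP => /eqP sum0t; rewrite -[RHS]sum0t; apply: eq_bigr => i iA.
by rewrite we // -!exprM mulnC.
Qed.

Lemma root_of_unity_neq0 (C : numClosedFieldType) (z : C) : is_root_of_unity z -> z != 0.
Proof.
case=> n [n_gt0 zn]; apply/eqP => z0; move: zn.
by rewrite z0 expr0n gtn_eqF // => /eqP; rewrite eq_sym oner_eq0.
Qed.

Lemma geometric_sum_unity (R : idomainType) (x : R) p :
  x ^+ p = 1 -> \sum_(r < p) x ^+ r = if x == 1 then p%:R else 0.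
Proof.
move=> xp; have [->|x_neq1] := eqVneq x 1.
  by rewrite (eq_bigr (fun=> 1)) ?sumr_const ?card_ord // => r _; rewrite expr1n.
apply/eqP; move: (subrX1 x p); rewrite xp subrr => /esym/eqP.
by rewrite mulf_eq0 subr_eq0 (negPf x_neq1).
Qed.

Lemma exists_unity_root_notin (F : fieldType) (s : seq F) p (z : F) :
  p.-primitive_root z -> (size s < p)%N -> exists2 v : F, v ^+ p = 1 & v \notin s.
Proof.
move=> prim_z lt_s_p; pose r := [seq z ^+ i | i <- iota 0 p].
have uniq_r : uniq r.
  rewrite map_inj_in_uniq ?iota_uniq // => i j; rewrite !mem_iota /= => ltip ltjp /eqP.
  by rewrite (eq_prim_root_expr prim_z) !modn_small // => /eqP.
have /allPn[_ /mapP[i _ ->] zi_notin] : ~~ all (mem s) r.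
  apply: contraTN lt_s_p => /allP r_sub; rewrite -leqNgt.
  by have := uniq_leq_size uniq_r r_sub; rewrite size_map size_iota.
by exists (z ^+ i); rewrite // exprAC (prim_expr_order prim_z) expr1n.
Qed.

Lemma dvdn_affine_uniq p m a r s : coprime p m ->
  (p %| a + m * r)%N -> (p %| a + m * s)%N -> (r < p)%N -> (s < p)%N -> r = s.
Proof.
move=> co_pm; wlog le_rs : r s / (r <= s)%N.
  move=> IH dr ds rp sp; case/orP: (leq_total r s) => /IH; first exact.
  by move=> /(_ ds dr sp rp).
move=> dr ds _ sp; have := dvdn_sub ds dr; rewrite subnDl -mulnBr Gauss_dvdr //.
have [|pos] := posnP (s - r); first lia.
by move/(dvdn_leq pos); lia.
Qed.

Lemma prime_dvdn_Cconst k p : prime p -> (p <= 2 * k)%N -> (p %| Cconst k)%N.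
Proof.
move=> p_pr le_p_2k; have lt_p : (p < (2 * k).+1)%N by [].
by rewrite /Cconst (bigD1 (Ordinal lt_p)) //= dvdn_mulr.
Qed.

Lemma dvdn_Cconst_or_split k N : (0 < N)%N -> (N %| Cconst k)%N \/
  exists p N', [/\ prime p, N = (p * N')%N & (p %| N')%N \/ (2 * k < p)%N].
Proof.
elim/ltn_ind: N => N IH N_gt0; have [N_le1|N_gt1] := leqP N 1.
  by left; have -> : N = 1%N by lia.
set p := pdiv N; have p_pr : prime p := pdiv_prime N_gt1.
set N' := (N %/ p)%N; have DN : N = (p * N')%N by rewrite mulnC divnK // pdiv_dvd.
have [dvd_p_N'|ndvd_p_N'] := boolP (p %| N')%N; first by right; exists p, N'; split; auto.
have [le_p_2k|] := leqP p (2 * k); last by right; exists p, N'; split; auto.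
have N'_gt0 : (0 < N')%N by move: N_gt0; rewrite DN muln_gt0 => /andP[].
have lt_N'_N : (N' < N)%N by rewrite DN -[X in (X < _)%N]mul1n ltn_pmul2r ?prime_gt1.
case: (IH N' lt_N'_N N'_gt0) => [dvd_N'_C|[q [M [q_pr DN' split_q]]]].
  by left; rewrite DN Gauss_dvd ?dvd_N'_C ?prime_dvdn_Cconst ?prime_coprime.
right; exists q, (p * M)%N; split => //; first by rewrite DN DN' mulnCA.
by case: split_q => [?|?]; [left; rewrite dvdn_mull | right].
Qed.

Section MinimalVanishingSums.

Variables (C : numClosedFieldType) (I : finType) (c : I -> rat) (w : I -> C).

Definition wsum (B : {set I}) := \sum_(i in B) ratr (c i) * w i.

Definition minimal_vanishing (A : {set I}) :=
  wsum A = 0 /\ forall B : {set I}, B \subset A -> B != set0 -> wsum B = 0 -> B = A.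

Lemma minimal_vanishing_exists x : wsum setT = 0 -> exists2 A, minimal_vanishing A & x \in A.
Proof.
move=> sumT0; pose P (A : {set I}) := (x \in A) && (wsum A == 0).
have PT : P setT by rewrite /P in_setT sumT0 eqxx.
case: (arg_minnP (fun A : {set I} => #|A|) PT) => A /andP[xA /eqP sumA0] A_min.
exists A => //; split => // B sub_BA B_neq0 sumB0.
have sumAB0 : wsum (A :\: B) = 0.
  by move: sumA0; rewrite /wsum (big_setID B) /= (setIidPr sub_BA) -/(wsum B) sumB0 add0r.
have [xB|xNB] := boolP (x \in B).
  apply/eqP; rewrite eqEcard sub_BA A_min //.
  by rewrite /P xB sumB0 eqxx.
have : (#|A| <= #|A :\: B|)%N by apply: A_min; rewrite /P inE xNB xA sumAB0 eqxx.
rewrite cardsD (setIidPr sub_BA).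
have : (0 < #|B|)%N by rewrite card_gt0.
have : (#|B| <= #|A|)%N by apply: subset_leq_card.
lia.
Qed.

Variables (A : {set I}) (j0 : I).
Hypotheses (minA : minimal_vanishing A) (j0A : j0 \in A) (w_j0 : w j0 = 1).

Definition power_sum t := \sum_(i in A) ratr (c i) * w i ^+ t.

Lemma power_sum_coprime N t :
  (0 < N)%N -> {in A, forall i, w i ^+ N = 1} -> coprime t N -> power_sum t = 0.
Proof. by move=> N_gt0 wN co; apply: sum_exp_coprime_eq0 N_gt0 wN co _; case: minA. Qed.

(* Averaging over [r] isolates the subsum over [w i ^+ N' = 1], which contains
   [j0]; minimality then forces it to be all of [A]. *)
Lemma exp_eq1_of_power_sums p N' :
  (0 < p)%N -> {in A, forall i, w i ^+ (p * N') = 1} ->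
  (forall r, (r < p)%N -> power_sum (1 + N' * r) = 0) ->
  {in A, forall i, w i ^+ N' = 1}.
Proof.
move=> p_gt0 wpN sum0; pose B := [set i in A | w i ^+ N' == 1].
suff <- : B = A by move=> i; rewrite inE => /andP[_ /eqP].
case: minA => _; apply.
- by apply/subsetP => i; rewrite inE => /andP[].
- by apply/set0Pn; exists j0; rewrite inE j0A w_j0 expr1n eqxx.
have : \sum_(r < p) power_sum (1 + N' * r) = p%:R * wsum B.
  rewrite exchange_big mulr_sumr [LHS]big_mkcond [RHS]big_mkcond /=.
  apply: eq_bigr => i _; rewrite inE; case: (boolP (i \in A)) => iA /=; last by [].
  under eq_bigr do rewrite exprD expr1 exprM mulrA.
  rewrite -mulr_sumr geometric_sum_unity; last by rewrite -exprM mulnC wpN.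
  by case: eqP; rewrite ?mulr0 // mulrC.
rewrite big1 => [/esym/eqP|r _]; last exact: sum0.
by rewrite mulf_eq0 pnatr_eq0 gtn_eqF //= => /eqP.
Qed.

Lemma twisted_power_sums_eq0 p N' v :
  v ^+ p = 1 -> {in A, forall i, w i ^+ N' != v} ->
  {in A, forall i, w i ^+ (p * N') = 1} ->
  \sum_(r < p) v ^- r * power_sum (1 + N' * r) = 0.
Proof.
move=> vp wN'_neq_v wpN; under eq_bigr do rewrite mulr_sumr.
rewrite exchange_big big1 // => i iA.
have -> : \sum_(r < p) v ^- r * (ratr (c i) * w i ^+ (1 + N' * r))
    = ratr (c i) * w i * \sum_(r < p) (w i ^+ N' / v) ^+ r.
  by rewrite mulr_sumr; apply: eq_bigr => r _; rewrite exprD expr1 exprM expr_div_n; ring.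
rewrite geometric_sum_unity; last by rewrite expr_div_n -exprM mulnC wpN // vp divr1.
by case: eqP => [/divr1_eq/eqP|]; rewrite ?mulr0 // (negPf (wN'_neq_v i iA)).
Qed.

Lemma minimal_vanishing_reduce p N' :
  prime p -> (0 < N')%N -> {in A, forall i, w i ^+ (p * N') = 1} ->
  (p %| N' \/ #|A| < p)%N -> {in A, forall i, w i ^+ N' = 1}.
Proof.
move=> p_pr N'_gt0 wpN p_dvd_or_big; have p_gt0 := prime_gt0 p_pr.
have pN'_gt0 : (0 < p * N')%N by rewrite muln_gt0 p_gt0.
have coprime_pN' r : coprime (1 + N' * r) (p * N') = ~~ (p %| 1 + N' * r)%N.
  rewrite coprimeMr coprime_sym prime_coprime // [coprime _ N']coprime_sym.
  by rewrite /coprime addnC mulnC gcdnMDl gcdn1 andbT.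
apply: (exp_eq1_of_power_sums p_gt0 wpN) => r lt_r_p.
have [co|] := boolP (coprime (1 + N' * r) (p * N')); first exact: power_sum_coprime co.
rewrite coprime_pN' negbK => dvd_r.
have ndvd_p_N' : ~~ (p %| N')%N.
  apply: contraL dvd_r => dvd_p_N'.
  by rewrite dvdn_addl ?dvdn_mulr // dvdn1 gtn_eqF ?prime_gt1.
have [z prim_z] := prim_root_exists C p_gt0.
have size_lt_p : (size [seq w i ^+ N' | i in A] < p)%N.
  by rewrite size_map -cardE; case: p_dvd_or_big => // /(negP ndvd_p_N').
have [v vp v_notin] := exists_unity_root_notin prim_z size_lt_p.
have v_neq0 : v != 0 by apply: root_of_unity_neq0; exists p.
have wN'_neq_v : {in A, forall i, w i ^+ N' != v}.
  by move=> i iA; apply: contraNneq v_notin => <-; apply: map_f; rewrite mem_enum.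
have := twisted_power_sums_eq0 vp wN'_neq_v wpN.
rewrite (bigD1 (Ordinal lt_r_p)) //= big1 ?addr0 => [/eqP|s s_neq_r].
  by rewrite mulf_eq0 invr_eq0 expf_eq0 (negPf v_neq0) andbF => /eqP.
rewrite (power_sum_coprime pN'_gt0 wpN) ?mulr0 // coprime_pN'; apply: contra s_neq_r => dvd_s.
by apply/eqP/val_inj/(dvdn_affine_uniq _ dvd_s dvd_r); rewrite ?prime_coprime.
Qed.

Lemma minimal_vanishing_unity k N :
  (0 < N)%N -> {in A, forall i, w i ^+ N = 1} -> (#|A| <= 2 * k)%N ->
  {in A, forall i, w i ^+ Cconst k = 1}.
Proof.
elim/ltn_ind: N => N IH N_gt0 wN card_A.
have [/dvdnP[m ->]|[p [N' [p_pr DN p_dvd_or_big]]]] := dvdn_Cconst_or_split k N_gt0.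
  by move=> i iA; rewrite mulnC exprM wN // expr1n.
have N'_gt0 : (0 < N')%N by move: N_gt0; rewrite DN muln_gt0 => /andP[].
have lt_N'_N : (N' < N)%N by rewrite DN -[X in (X < _)%N]mul1n ltn_pmul2r ?prime_gt1.
apply: (IH N' lt_N'_N N'_gt0 _ card_A); apply: (minimal_vanishing_reduce p_pr N'_gt0).
  by rewrite -DN.
by case: p_dvd_or_big => [|/(leq_ltn_trans card_A)]; [left | right].
Qed.

End MinimalVanishingSums.

Lemma minimal_vanishing_divr (C : numClosedFieldType) (I : finType) (c : I -> rat)
    (w : I -> C) (A : {set I}) (u : C) :
  u != 0 -> minimal_vanishing c w A -> minimal_vanishing c (fun i => w i / u) A.
Proof.
move=> u_neq0 [sumA0 minA].
have wsum_divr B : wsum c (fun i => w i / u) B = wsum c w B / u.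
  by rewrite /wsum mulr_suml; apply: eq_bigr => i _; rewrite mulrA.
split=> [|B sub_BA B_neq0]; first by rewrite wsum_divr sumA0 mul0r.
by rewrite wsum_divr => /eqP; rewrite mulf_eq0 invr_eq0 (negPf u_neq0) orbF => /eqP; apply: minA.
Qed.

Lemma common_unity_order (C : numClosedFieldType) (I : finType) (f : I -> C) :
  (forall i, is_root_of_unity (f i)) -> exists2 N, (0 < N)%N & forall i, f i ^+ N = 1.
Proof.
move=> f_unity; have [n n_spec] := fin_all_exists f_unity.
exists (\prod_i n i)%N; first by apply: prodn_gt0 => i; case: (n_spec i).
by move=> i; rewrite (bigD1 i) //= exprM; case: (n_spec i) => _ ->; rewrite expr1n.
Qed.

Definition sum_join {I J T : Type} (f : I -> T) (g : J -> T) (x : I + J) : T :=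
  match x with inl i => f i | inr j => g j end.

Section SumJoin.

Variables (C : numClosedFieldType) (I J : finType).
Variables (c : I -> rat) (b : J -> rat) (x : I -> C) (y : J -> C).

Local Notation d := (sum_join c (fun j => - b j)).
Local Notation z := (sum_join x y).

Lemma wsum_sum_join (B : {set I + J}) :
  wsum d z B = \sum_(i | inl i \in B) ratr (c i) * x i - \sum_(j | inr j \in B) ratr (b j) * y j.
Proof.
rewrite /wsum big_sumType /= -sumrN; congr (_ + _).
by apply: eq_bigr => j _; rewrite rmorphN mulNr.
Qed.

(* The [y] side is reached because no nonempty subsum of [sum c x] vanishes. *)
Lemma minimal_vanishing_sum_join i :
  \sum_i ratr (c i) * x i = \sum_j ratr (b j) * y j ->
  (forall S : {set I}, S != set0 -> \sum_(i in S) ratr (c i) * x i != 0) ->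
  exists2 A, minimal_vanishing d z A & inl i \in A /\ exists j, inr j \in A.
Proof.
move=> sum_eq nondeg.
have sumT0 : wsum d z setT = 0.
  by rewrite wsum_sum_join !(eq_bigl _ _ (fun _ => in_setT _)) sum_eq subrr.
have [A minA iA] := minimal_vanishing_exists (inl i) sumT0.
exists A => //; split => //; apply/existsP; apply: contraT => /existsPn notin.
case: minA => + _; rewrite wsum_sum_join [X in _ - X]big_pred0 => [|j]; last first.
  exact/negbTE/notin.
rewrite subr0 => sum0.
have := nondeg [set i' | inl i' \in A].
rewrite (eq_bigl (fun i' => inl i' \in A)) => [|i']; last by rewrite inE.
by rewrite sum0 eqxx; apply; apply/set0Pn; exists i; rewrite inE.
Qed.

End SumJoin.

Lemma inZ_ratio_unity (C : numClosedFieldType) k (a : C) (zeta xi : k.-tuple C) i :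
  inZ a zeta -> inZ a xi -> exists j, (tnth zeta i / tnth xi j) ^+ Cconst k = 1.
Proof.
case=> [zeta_unity [c [sum_c nondeg]]] [xi_unity [b [sum_b _]]].
have [A minA [iA [j jA]]] :=
  minimal_vanishing_sum_join i (etrans sum_c (esym sum_b)) nondeg.
set u := sum_join (tnth zeta) (tnth xi) in minA; exists j.
have [|N N_gt0 uN] := @common_unity_order C _ u; first by case.
have uj_neq0 : u (inr j) != 0 by exact: root_of_unity_neq0 (xi_unity j).
have minA' := minimal_vanishing_divr uj_neq0 minA.
apply: (minimal_vanishing_unity minA' jA (divff uj_neq0) (k := k) N_gt0 _ _ iA).
- by move=> x _; rewrite expr_div_n !uN divr1.
- by rewrite (leq_trans (max_card _)) // card_sum !card_ord addnn -mul2n.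
Qed.

Theorem corollary7 (C : numClosedFieldType) (k : nat) (a : C)
  (hk : (1 <= k)%N) (ha : a != 0) :
  forall s : seq (k.-tuple C), uniq s -> (forall z, z \in s -> inZ a z) ->
    (size s <= (k * Cconst k) ^ k)%N.
Proof.
case=> [//|xi s'] uniq_s s_inZ; set s := xi :: s' in uniq_s s_inZ *.
have xi_inZ := s_inZ xi (mem_head _ _).
have Ck_gt0 : (0 < Cconst k)%N by apply: prodn_cond_gt0 => p /prime_gt0.
have [rho prim_rho] := prim_root_exists C Ck_gt0.
pose code (zeta : k.-tuple C) : {ffun 'I_k -> 'I_k * 'I_(Cconst k)} :=
  [ffun i => odflt (Ordinal hk, Ordinal Ck_gt0)
     [pick jm : 'I_k * 'I_(Cconst k) | tnth zeta i == tnth xi jm.1 * rho ^+ jm.2]].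
have codeP zeta i : zeta \in s ->
    tnth zeta i = tnth xi (code zeta i).1 * rho ^+ (code zeta i).2.
  move=> zeta_s; rewrite ffunE; case: pickP => [jm /eqP //|no_jm].
  have [j /(prim_rootP prim_rho)[m Dm]] := inZ_ratio_unity i (s_inZ _ zeta_s) xi_inZ.
  have xij_neq0 : tnth xi j != 0 by case: xi_inZ => xi_unity _; apply: root_of_unity_neq0.
  by have := no_jm (j, m); rewrite /= -Dm mulrC divfK ?eqxx.
have code_inj : {in s &, injective code}.
  move=> z1 z2 z1s z2s eq_code; apply: eq_from_tnth => i.
  by rewrite (codeP z1) // (codeP z2) // eq_code.
rewrite -(size_map code) -(card_uniqP _) ?map_inj_in_uniq //.
by rewrite (leq_trans (max_card _)) // card_ffun card_prod !card_ord.
Qed.
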